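(* The map $F:\mathcal F_D\to[\mathcal F_C\to\mathcal F_R]$ is an isomorphism with inverse $G$, and $H:\mathcal F_C\to\mathcal F_D\times\mathcal F_C$ is an isomorphism with inverse $K$, where, for $d\in\mathcal F_D$, $k\in\mathcal F_C$ and $f\in[\mathcal F_C\to\mathcal F_R]$: - $F\,d\,k=d\cdot k$; - $G\,f=\uparrow_D\{\bigwedge_{i\in I}\kappa_i\to\rho_i\mid \forall i\in I:\ \rho_i\in f(\uparrow_C\kappa_i)\}$; - $H\,k=\langle\{\delta\mid\exists\kappa.\ \delta\times\kappa\in k\},\{\kappa\mid\exists\delta.\ \delta\times\kappa\in k\}\rangle$; - $K\langle d,k\rangle=d::k$.
   Context: Let $R$ be an $\omega$-algebraic lattice, with compact elements $\mathcal K(R)$, bottom $\bot$ and join $\sqcup$. Type languages: - $\Lambda_R$: $\rho::=\psi_a\mid\omega\mid\rho\wedge\rho$, with one constant $\psi_a$ for each $a\in\mathcal K(R)$. - $\Lambda_D$: $\delta::=\rho\mid\kappa\to\rho\mid\omega\mid\delta\wedge\delta$, with $\rho\in\Lambda_R$. - $\Lambda_C$: $\kappa::=\delta\times\kappa\mid\omega\mid\kappa\wedge\kappa$. An intersection type theory is a reflexive, transitive relation $\le$ satisfying $\sigma\wedge\tau\le\sigma$, $\sigma\wedge\tau\le\tau$, $\sigma\le\omega$, and, if $\rho\le\sigma$ and $\rho\le\tau$, then $\rho\le\sigma\wedge\tau$. We write $\sigma\sim\tau$ when $\sigma\le\tau\le\sigma$. The relations are defined as follows: - $\le_R$ is the least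 intersection type theory on $\Lambda_R$ with $\psi_\bot\sim_R\omega$ and $\psi_{a\sqcup b}\sim_R\psi_a\wedge\psi_b$. - $\le_D$ and $\le_C$ are the least intersection type theories on $\Lambda_D$ and $\Lambda_C$ closed under the following: - if $\rho_1\le_R\rho_2$ then $\rho_1\le_D\rho_2$; - $\omega\le_D\omega\to\omega$; - $\psi_a\le_D\omega\to\psi_a$ and $\omega\to\psi_a\le_D\psi_a$; - $\omega\le_C\omega\times\omega$; - $(\kappa\to\rho_1)\wedge(\kappa\to\rho_2)\le_D\kappa\to(\rho_1\wedge\rho_2)$; - $(\delta_1\times\kappa_1)\wedge(\delta_2\times\kappa_2)\le_C(\delta_1\wedge\delta_2)\times(\kappa_1\wedge\kappa_2)$; - if $\kappa_2\le_C\kappa_1$ and $\rho_1\le_R\rho_2$ then $\kappa_1\to\rho_1\le_D\kappa_2\to\rho_2$; - if $\delta_1\le_D\delta_2$ and $\kappa_1\le_C\kappa_2$ then $\delta_1\times\kappa_1\le_C\delta_2\times\kappa_2$. A filter over $(\Lambda_A,\le_A)$ is a set containing $\omega$, upward closed under $\le_A$, and closed under $\wedge$. $\mathcal F_A$ is the set of filters, ordered by $\subseteq$. For a set $S$ of types, $\uparrow_A S$ is its upward closure, and $\uparrow_A\sigma=\{\tau\mid\sigma\le_A\tau\}$. $[\mathcal F_C\to\mathcal F_R]$ is the set of Scott-continuous functions, ordered pointwise, and $\mathcal F_D\times\mathcal F_C$ is ordered componentwise. The two operations are: - $d\cdot k=\uparrow_R\{\rho\in\Lambda_R\mid \exists\,\kappa\to\rho\in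 d \text{ with }\kappa\in k\}$; - $d::k=\uparrow_C\{\bigwedge_{i\in I}\delta_i\times\kappa_i\mid\forall i\in I:\ \delta_i\in d,\ \kappa_i\in k\}$. In both, $I$ ranges over finite sets, and the empty intersection is $\omega$. *)

From Stdlib Require Import List.
Import ListNotations.


Definition is_lub {T} (le : T -> T -> Prop) (S : T -> Prop) (x : T) : Prop :=
  (forall y, S y -> le y x) /\ (forall z, (forall y, S y -> le y z) -> le x z).

Definition directed {T} (le : T -> T -> Prop) (S : T -> Prop) : Prop :=
  (exists x, S x) /\
  (forall x y, S x -> S y -> exists z, S z /\ le x z /\ le y z).

Definition is_compact {T} (le : T -> T -> Prop) (c : T) : Prop :=
  forall S, directed le S -> forall s, is_lub le S s -> le c s ->
  exists x, S x /\ le c x.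

Definition omega_algebraic_lattice {T} (le : T -> T -> Prop) : Prop :=
  (forall x, le x x) /\
  (forall x y z, le x y -> le y z -> le x z) /\
  (forall x y, le x y -> le y x -> x = y) /\
  (forall S : T -> Prop, exists x, is_lub le S x) /\
  (forall x, is_lub le (fun c => is_compact le c /\ le c x) x) /\
  (exists e : nat -> T, forall c, is_compact le c -> exists n, e n = c).

Definition compacts {T} (le : T -> T -> Prop) := {c : T | is_compact le c}.

Definition is_bot {T} (le : T -> T -> Prop) (a : compacts le) : Prop :=
  is_lub le (fun _ => False) (proj1_sig a).

Definition is_join {T} (le : T -> T -> Prop) (a b c : compacts le) : Prop :=
  is_lub le (fun x => x = proj1_sig a \/ x = proj1_sig b) (proj1_sig c).

(* Lambda_R is literally a subset of Lambda_D via [embR].              *)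

Inductive tyR (K : Type) : Type :=
| psiR (a : K) | omR | andR (r1 r2 : tyR K).

Inductive tyD (K : Type) : Type :=
| psiD (a : K) | arrD (k : tyC K) (r : tyR K) | omD | andD (d1 d2 : tyD K)
with tyC (K : Type) : Type :=
| prdC (d : tyD K) (k : tyC K) | omC | andC (k1 k2 : tyC K).

Arguments psiR {K} a. Arguments omR {K}. Arguments andR {K} r1 r2.
Arguments psiD {K} a. Arguments arrD {K} k r. Arguments omD {K}.
Arguments andD {K} d1 d2.
Arguments prdC {K} d k. Arguments omC {K}. Arguments andC {K} k1 k2.

Fixpoint embR {K} (r : tyR K) : tyD K :=
  match r with
  | psiR a => psiD a
  | omR => omD
  | andR r1 r2 => andD (embR r1) (embR r2)
  end.

(* The relations <=_R, <=_D, <=_C (least, hence inductive).            *)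

Inductive leR {K} (isbot : K -> Prop) (isjoin : K -> K -> K -> Prop)
  : tyR K -> tyR K -> Prop :=
| leR_refl r : leR isbot isjoin r r
| leR_trans r1 r2 r3 : leR isbot isjoin r1 r2 -> leR isbot isjoin r2 r3 ->
    leR isbot isjoin r1 r3
| leR_andl r1 r2 : leR isbot isjoin (andR r1 r2) r1
| leR_andr r1 r2 : leR isbot isjoin (andR r1 r2) r2
| leR_top r : leR isbot isjoin r omR
| leR_glb r s t : leR isbot isjoin r s -> leR isbot isjoin r t ->
    leR isbot isjoin r (andR s t)
| leR_bot1 a : isbot a -> leR isbot isjoin (psiR a) omR
| leR_bot2 a : isbot a -> leR isbot isjoin omR (psiR a)
| leR_join1 a b c : isjoin a b c ->
    leR isbot isjoin (psiR c) (andR (psiR a) (psiR b))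
| leR_join2 a b c : isjoin a b c ->
    leR isbot isjoin (andR (psiR a) (psiR b)) (psiR c).

Inductive leD {K} (isbot : K -> Prop) (isjoin : K -> K -> K -> Prop)
  : tyD K -> tyD K -> Prop :=
| leD_refl d : leD isbot isjoin d d
| leD_trans d1 d2 d3 : leD isbot isjoin d1 d2 -> leD isbot isjoin d2 d3 ->
    leD isbot isjoin d1 d3
| leD_andl d1 d2 : leD isbot isjoin (andD d1 d2) d1
| leD_andr d1 d2 : leD isbot isjoin (andD d1 d2) d2
| leD_top d : leD isbot isjoin d omD
| leD_glb d s t : leD isbot isjoin d s -> leD isbot isjoin d t ->
    leD isbot isjoin d (andD s t)
| leD_R r1 r2 : leR isbot isjoin r1 r2 -> leD isbot isjoin (embR r1) (embR r2)
| leD_omarr : leD isbot isjoin omD (arrD omC omR)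
| leD_psiarr a : leD isbot isjoin (psiD a) (arrD omC (psiR a))
| leD_arrpsi a : leD isbot isjoin (arrD omC (psiR a)) (psiD a)
| leD_arrand k r1 r2 :
    leD isbot isjoin (andD (arrD k r1) (arrD k r2)) (arrD k (andR r1 r2))
| leD_arr k1 k2 r1 r2 : leC isbot isjoin k2 k1 -> leR isbot isjoin r1 r2 ->
    leD isbot isjoin (arrD k1 r1) (arrD k2 r2)
with leC {K} (isbot : K -> Prop) (isjoin : K -> K -> K -> Prop)
  : tyC K -> tyC K -> Prop :=
| leC_refl k : leC isbot isjoin k k
| leC_trans k1 k2 k3 : leC isbot isjoin k1 k2 -> leC isbot isjoin k2 k3 ->
    leC isbot isjoin k1 k3
| leC_andl k1 k2 : leC isbot isjoin (andC k1 k2) k1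
| leC_andr k1 k2 : leC isbot isjoin (andC k1 k2) k2
| leC_top k : leC isbot isjoin k omC
| leC_glb k s t : leC isbot isjoin k s -> leC isbot isjoin k t ->
    leC isbot isjoin k (andC s t)
| leC_omprd : leC isbot isjoin omC (prdC omD omC)
| leC_prdand d1 k1 d2 k2 :
    leC isbot isjoin (andC (prdC d1 k1) (prdC d2 k2))
                     (prdC (andD d1 d2) (andC k1 k2))
| leC_prd d1 d2 k1 k2 : leD isbot isjoin d1 d2 -> leC isbot isjoin k1 k2 ->
    leC isbot isjoin (prdC d1 k1) (prdC d2 k2).

Definition LeR {T} (le : T -> T -> Prop) := leR (@is_bot T le) (@is_join T le).
Definition LeD {T} (le : T -> T -> Prop) := leD (@is_bot T le) (@is_join T le).
Definition LeC {T} (le : T -> T -> Prop) := leC (@is_bot T le) (@is_join T le).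

Definition subset {A} (X Y : A -> Prop) : Prop := forall a, X a -> Y a.
Definition seteq {A} (X Y : A -> Prop) : Prop := forall a, X a <-> Y a.

Definition is_filter {A} (le : A -> A -> Prop) (om : A) (andA : A -> A -> A)
  (X : A -> Prop) : Prop :=
  X om /\ (forall s t, X s -> le s t -> X t) /\
  (forall s t, X s -> X t -> X (andA s t)).

Definition upset {A} (le : A -> A -> Prop) (S : A -> Prop) : A -> Prop :=
  fun t => exists s, S s /\ le s t.
Definition upone {A} (le : A -> A -> Prop) (s : A) : A -> Prop :=
  fun t => le s t.

Definition filterR {T} (le : T -> T -> Prop) := is_filter (LeR le) omR andR.
Definition filterD {T} (le : T -> T -> Prop) := is_filter (LeD le) omD andD.
Definition filterC {T} (le : T -> T -> Prop) := is_filter (LeC le) omC andC.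

Fixpoint bigandD {K} (l : list (tyD K)) : tyD K :=
  match l with
  | [] => omD
  | [x] => x
  | x :: l' => andD x (bigandD l')
  end.
Fixpoint bigandC {K} (l : list (tyC K)) : tyC K :=
  match l with
  | [] => omC
  | [x] => x
  | x :: l' => andC x (bigandC l')
  end.

Definition union_fam {A} (D : (A -> Prop) -> Prop) : A -> Prop :=
  fun a => exists X, D X /\ X a.

Definition scott_cont {T} (le : T -> T -> Prop)
  (f : (tyC (compacts le) -> Prop) -> (tyR (compacts le) -> Prop)) : Prop :=
  (forall k, filterC le k -> filterR le (f k)) /\
  (forall k k', filterC le k -> filterC le k' -> subset k k' ->
     subset (f k) (f k')) /\
  (forall D : (tyC (compacts le) -> Prop) -> Prop,
     (forall k, D k -> filterC le k) -> directed subset D ->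
     seteq (f (union_fam D)) (fun r => exists k, D k /\ f k r)).

Definition fun_le {T} (le : T -> T -> Prop)
  (f g : (tyC (compacts le) -> Prop) -> (tyR (compacts le) -> Prop)) : Prop :=
  forall k, filterC le k -> subset (f k) (g k).

Definition app {T} (le : T -> T -> Prop) (d : tyD (compacts le) -> Prop)
  (k : tyC (compacts le) -> Prop) : tyR (compacts le) -> Prop :=
  upset (LeR le) (fun r => exists kap, d (arrD kap r) /\ k kap).

Definition cons {T} (le : T -> T -> Prop) (d : tyD (compacts le) -> Prop)
  (k : tyC (compacts le) -> Prop) : tyC (compacts le) -> Prop :=
  upset (LeC le) (fun c => exists l : list (tyD (compacts le) * tyC (compacts le)),
    (forall p, In p l -> d (fst p) /\ k (snd p)) /\
    c = bigandC (map (fun p => prdC (fst p) (snd p)) l)).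

Definition Fmap {T} (le : T -> T -> Prop) (d : tyD (compacts le) -> Prop) :=
  fun k => app le d k.

Definition Gmap {T} (le : T -> T -> Prop)
  (f : (tyC (compacts le) -> Prop) -> (tyR (compacts le) -> Prop))
  : tyD (compacts le) -> Prop :=
  upset (LeD le) (fun d => exists l : list (tyC (compacts le) * tyR (compacts le)),
    (forall p, In p l -> f (upone (LeC le) (fst p)) (snd p)) /\
    d = bigandD (map (fun p => arrD (fst p) (snd p)) l)).

Definition Hmap {T} (le : T -> T -> Prop) (k : tyC (compacts le) -> Prop)
  : (tyD (compacts le) -> Prop) * (tyC (compacts le) -> Prop) :=
  (fun d => exists kap, k (prdC d kap), fun kap => exists d, k (prdC d kap)).

Definition Kmap {T} (le : T -> T -> Prop)
  (dk : (tyD (compacts le) -> Prop) * (tyC (compacts le) -> Prop))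
  : tyC (compacts le) -> Prop :=
  cons le (fst dk) (snd dk).

Definition F_iso_G {T} (le : T -> T -> Prop) : Prop :=
  (forall d, filterD le d -> scott_cont le (Fmap le d)) /\
  (forall f, scott_cont le f -> filterD le (Gmap le f)) /\
  (forall d d', filterD le d -> filterD le d' -> subset d d' ->
     fun_le le (Fmap le d) (Fmap le d')) /\
  (forall f g, scott_cont le f -> scott_cont le g -> fun_le le f g ->
     subset (Gmap le f) (Gmap le g)) /\
  (forall d, filterD le d -> seteq (Gmap le (Fmap le d)) d) /\
  (forall f, scott_cont le f -> forall k, filterC le k ->
     seteq (Fmap le (Gmap le f) k) (f k)).

Definition H_iso_K {T} (le : T -> T -> Prop) : Prop :=
  (forall k, filterC le k -> filterD le (fst (Hmap le k)) /\
                             filterC le (snd (Hmap le k))) /\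
  (forall d k, filterD le d -> filterC le k -> filterC le (Kmap le (d, k))) /\
  (forall k k', filterC le k -> filterC le k' -> subset k k' ->
     subset (fst (Hmap le k)) (fst (Hmap le k')) /\
     subset (snd (Hmap le k)) (snd (Hmap le k'))) /\
  (forall d k d' k', filterD le d -> filterC le k -> filterD le d' ->
     filterC le k' -> subset d d' -> subset k k' ->
     subset (Kmap le (d, k)) (Kmap le (d', k'))) /\
  (forall k, filterC le k -> seteq (Kmap le (Hmap le k)) k) /\
  (forall d k, filterD le d -> filterC le k ->
     seteq (fst (Hmap le (Kmap le (d, k)))) d /\
     seteq (snd (Hmap le (Kmap le (d, k)))) k).

(* F and G (resp. H and K) only build finite meets and upward closures, so they
   produce filters and are monotone.
   A filter is generated by its atomic members (ψ_a, arrows κ → ρ, products δ × κ),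
   and ψ_a ~ ω → ψ_a, which gives d ⊆ G (F d) and k ⊆ K (H k).  For the converse
   inclusions, ≤_D and ≤_C are sound for a semantic reading of types: satD f holds of
   the types all of whose arrows κ → ρ have ρ ∈ f k whenever κ ∈ k, and satC d k of
   those whose products δ × κ have δ ∈ d and κ ∈ k.  These are filters, hence contain
   G f and K ⟨d, k⟩.  Finally f ⊆ F (G f) by Scott continuity, writing k as the
   directed union of the principal filters ↑κ for κ ∈ k. *)

From Stdlib Require Import List.
Import ListNotations.

Lemma filter_top {A} {le : A -> A -> Prop} {om an X} :
  is_filter le om an X -> X om.
Proof. intros H; exact (proj1 H). Qed.

Lemma filter_up {A} {le : A -> A -> Prop} {om an X} :
  is_filter le om an X -> forall s t, X s -> le s t -> X t.
Proof. intros H; exact (proj1 (proj2 H)). Qed.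

Lemma filter_and {A} {le : A -> A -> Prop} {om an X} :
  is_filter le om an X -> forall s t, X s -> X t -> X (an s t).
Proof. intros H; exact (proj2 (proj2 H)). Qed.

Lemma union_directed_filter {A : Type} {le : A -> A -> Prop} {om an}
  (D : (A -> Prop) -> Prop) :
  (forall Y, D Y -> is_filter le om an Y) -> directed subset D ->
  is_filter le om an (union_fam D).
Proof.
  intros HD [[Y HY] Hdir]. split; [|split].
  - exists Y. split; [exact HY | exact (filter_top (HD Y HY))].
  - intros s t [Z [HZ Hs]] Hst. exists Z.
    split; [exact HZ | exact (filter_up (HD Z HZ) _ _ Hs Hst)].
  - intros s t [Y1 [H1 Hs]] [Y2 [H2 Ht]].
    destruct (Hdir Y1 Y2 H1 H2) as [Z [HZ [H1Z H2Z]]].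
    exists Z. split; [exact HZ|]. apply (filter_and (HD Z HZ)); auto.
Qed.

(* [big] abstracts bigandD and bigandC, which return [x] itself on a singleton [x]. *)
Set Implicit Arguments.
Record meet_preorder (A : Type) (le : A -> A -> Prop) (om : A)
    (an : A -> A -> A) (big : list A -> A) : Prop := {
  mp_refl : forall x, le x x;
  mp_trans : forall x y z, le x y -> le y z -> le x z;
  mp_andl : forall x y, le (an x y) x;
  mp_andr : forall x y, le (an x y) y;
  mp_top : forall x, le x om;
  mp_glb : forall x y z, le x y -> le x z -> le x (an y z);
  mp_big_nil : big [] = om;
  mp_big_cons_le : forall x l, le (big (x :: l)) (an x (big l));
  mp_big_cons_ge : forall x l, le (an x (big l)) (big (x :: l)) }.
Unset Implicit Arguments.

Definition gen_filter {A B : Type} (le : A -> A -> Prop) (big : list A -> A)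
  (P : B -> Prop) (g : B -> A) : A -> Prop :=
  upset le (fun x => exists l : list B, (forall p, In p l -> P p) /\ x = big (map g l)).

Definition principals {A : Type} (le : A -> A -> Prop) (X : A -> Prop)
  : (A -> Prop) -> Prop :=
  fun Y => exists c, X c /\ Y = upone le c.

Section Meets.
Context {A : Type} {le : A -> A -> Prop} {om : A} {an : A -> A -> A}
  {big : list A -> A} (M : meet_preorder le om an big).

Lemma upone_filter c : is_filter le om an (upone le c).
Proof.
  split; [|split]; unfold upone.
  - apply (mp_top M).
  - intros s t Hs Hst. exact (mp_trans M _ _ _ Hs Hst).
  - intros s t Hs Ht. exact (mp_glb M _ _ _ Hs Ht).
Qed.

Lemma filter_big X l :
  is_filter le om an X -> (forall x, In x l -> X x) -> X (big l).
Proof.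
  intros HX. induction l as [|x l IH]; intros Hl.
  - rewrite (mp_big_nil M). exact (filter_top HX).
  - apply (filter_up HX) with (an x (big l)); [|apply (mp_big_cons_ge M)].
    apply (filter_and HX); [apply Hl; left; reflexivity|].
    apply IH. intros y Hy. apply Hl. right. exact Hy.
Qed.

Lemma big_le_In x l : In x l -> le (big l) x.
Proof.
  induction l as [|y l IH]; [intros []|]. intros [<-|Hx].
  - exact (mp_trans M _ _ _ (mp_big_cons_le M _ _) (mp_andl M _ _)).
  - apply (mp_trans M) with (big l); [|exact (IH Hx)].
    exact (mp_trans M _ _ _ (mp_big_cons_le M _ _) (mp_andr M _ _)).
Qed.

Lemma big_le_incl l l' : incl l l' -> le (big l') (big l).
Proof.
  intros Hll'. apply (filter_big (upone le (big l'))); [apply upone_filter|].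
  intros x Hx. exact (big_le_In x l' (Hll' x Hx)).
Qed.

Lemma gen_filter_filter {B} (P : B -> Prop) g : is_filter le om an (gen_filter le big P g).
Proof.
  split; [|split].
  - exists om. split; [|apply (mp_refl M)].
    exists []. split; [intros _ []|]. symmetry. exact (mp_big_nil M).
  - intros s t [x [Hx Hxs]] Hst. exists x. split; [exact Hx|].
    exact (mp_trans M _ _ _ Hxs Hst).
  - intros s t [x1 [[l1 [H1 ->]] Hs]] [x2 [[l2 [H2 ->]] Ht]].
    exists (big (map g (l1 ++ l2))). split.
    + exists (l1 ++ l2). split; [|reflexivity].
      intros p Hp. apply in_app_or in Hp as [Hp|Hp]; auto.
    + rewrite map_app.
      apply (mp_glb M); eapply (mp_trans M); [| exact Hs | | exact Ht];
        apply big_le_incl; [apply incl_appl | apply incl_appr]; apply incl_refl.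
Qed.

Lemma gen_filter_gen {B} (P : B -> Prop) g p : P p -> gen_filter le big P g (g p).
Proof.
  intros Hp. exists (big (map g [p])). split.
  - exists [p]. split; [intros q [<-|[]]; exact Hp | reflexivity].
  - apply big_le_In. left. reflexivity.
Qed.

Lemma gen_filter_least {B} (P : B -> Prop) g X :
  is_filter le om an X -> (forall p, P p -> X (g p)) -> subset (gen_filter le big P g) X.
Proof.
  intros HX Hg x [y [[l [Hl ->]] Hy]].
  apply (filter_up HX) with (big (map g l)); [|exact Hy].
  apply filter_big; [exact HX|]. intros z Hz.
  apply in_map_iff in Hz as [p [<- Hp]]. auto.
Qed.

Lemma principals_filter X Y : principals le X Y -> is_filter le om an Y.
Proof. intros [c [_ ->]]. apply upone_filter. Qed.

Lemma principals_directed X : is_filter le om an X -> directed subset (principals le X).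
Proof.
  intros HX. split.
  - exists (upone le om). exists om. split; [exact (filter_top HX) | reflexivity].
  - intros Y Z [c1 [H1 ->]] [c2 [H2 ->]]. exists (upone le (an c1 c2)). split.
    + exists (an c1 c2). split; [exact (filter_and HX _ _ H1 H2) | reflexivity].
    + split; intros t Ht; eapply (mp_trans M); eauto; [apply (mp_andl M) | apply (mp_andr M)].
Qed.

Lemma sub_union_principals X : subset X (union_fam (principals le X)).
Proof.
  intros c Hc. exists (upone le c). split; [exists c; split; [exact Hc | reflexivity]|].
  apply (mp_refl M).
Qed.

End Meets.

Lemma gen_filter_mono {A B} (le : A -> A -> Prop) big (P Q : B -> Prop) g :
  (forall p, P p -> Q p) -> subset (gen_filter le big P g) (gen_filter le big Q g).
Proof.
  intros HPQ x [y [[l [Hl E]] Hy]]. exists y. split; [|exact Hy].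
  exists l. split; [intros p Hp; auto | exact E].
Qed.

Section Types.
Context {K : Type} (isbot : K -> Prop) (isjoin : K -> K -> K -> Prop).
Local Notation lR := (leR isbot isjoin).
Local Notation lD := (leD isbot isjoin).
Local Notation lC := (leC isbot isjoin).
Local Notation filtR := (is_filter lR omR andR).
Local Notation filtD := (is_filter lD omD andD).
Local Notation filtC := (is_filter lC omC andC).

Lemma leD_meet_preorder : meet_preorder lD omD andD bigandD.
Proof.
  split; try reflexivity; intros; try destruct l; simpl; eauto using leD.
Qed.

Lemma leC_meet_preorder : meet_preorder lC omC andC bigandC.
Proof.
  split; try reflexivity; intros; try destruct l; simpl; eauto using leC.
Qed.

Lemma leD_arr_meet k1 k2 r1 r2 :
  lD (andD (arrD k1 r1) (arrD k2 r2)) (arrD (andC k1 k2) (andR r1 r2)).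
Proof.
  eapply leD_trans; [|apply leD_arrand].
  apply leD_glb.
  - eapply leD_trans; [apply leD_andl|]. apply leD_arr; [apply leC_andl | apply leR_refl].
  - eapply leD_trans; [apply leD_andr|]. apply leD_arr; [apply leC_andr | apply leR_refl].
Qed.

Lemma leC_prd_meet x1 x2 c1 c2 : lC (andC (prdC x1 c1) (prdC x2 c2)) (prdC x1 c2).
Proof.
  eapply leC_trans; [apply leC_prdand|].
  apply leC_prd; [apply leD_andl | apply leC_andr].
Qed.

Lemma filterD_sub_atoms X Y : filtD X -> filtD Y ->
  (forall a, X (psiD a) -> Y (psiD a)) -> (forall c r, X (arrD c r) -> Y (arrD c r)) ->
  subset X Y.
Proof.
  intros HX HY Hpsi Harr x. induction x as [a|c r| |x1 IH1 x2 IH2]; intros Hx; auto.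
  - exact (filter_top HY).
  - apply (filter_and HY); [apply IH1 | apply IH2];
      eapply (filter_up HX); eauto using leD.
Qed.

Lemma filterC_sub_prd X Y : filtC X -> filtC Y ->
  (forall x c, X (prdC x c) -> Y (prdC x c)) -> subset X Y.
Proof.
  intros HX HY Hprd c. induction c as [x c _| |c1 IH1 c2 IH2]; intros Hc; auto.
  - exact (filter_top HY).
  - apply (filter_and HY); [apply IH1 | apply IH2];
      eapply (filter_up HX); eauto using leC.
Qed.

Fixpoint satC (d : tyD K -> Prop) (k : tyC K -> Prop) (c : tyC K) : Prop :=
  match c with
  | prdC x c' => d x /\ k c'
  | omC => True
  | andC c1 c2 => satC d k c1 /\ satC d k c2
  end.

Lemma satC_filter d k : filtD d -> filtC k -> filtC (satC d k).
Proof.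
  intros Hd Hk. split; [exact I | split; [|intros; split; assumption]].
  intros s t Hs Hst. revert Hs.
  induction Hst as [| | | | | | | | x1 x2 c1 c2 Hx12 Hc12]; simpl; try tauto.
  - intros _. split; [exact (filter_top Hd) | exact (filter_top Hk)].
  - intros [[Hx1 Hc1] [Hx2 Hc2]].
    split; [apply (filter_and Hd) | apply (filter_and Hk)]; assumption.
  - intros [Hx Hc]. split; [exact (filter_up Hd _ _ Hx Hx12) | exact (filter_up Hk _ _ Hc Hc12)].
Qed.

Fixpoint satD (f : (tyC K -> Prop) -> tyR K -> Prop) (x : tyD K) : Prop :=
  match x with
  | psiD a => forall k, filtC k -> f k (psiR a)
  | arrD c r => forall k, filtC k -> k c -> f k r
  | omD => True
  | andD x1 x2 => satD f x1 /\ satD f x2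
  end.

Section SatD.
Variable f : (tyC K -> Prop) -> tyR K -> Prop.
Hypothesis Hf : forall k, filtC k -> filtR (f k).

Lemma satD_embR r : satD f (embR r) <-> forall k, filtC k -> f k r.
Proof.
  induction r as [a| |r1 IH1 r2 IH2]; simpl.
  - reflexivity.
  - split; [intros _ k Hk; exact (filter_top (Hf k Hk)) | intros; exact I].
  - rewrite IH1, IH2. split.
    + intros [H1 H2] k Hk. exact (filter_and (Hf k Hk) _ _ (H1 k Hk) (H2 k Hk)).
    + intros H. split; intros k Hk; eapply (filter_up (Hf k Hk)); eauto using leR.
Qed.

Lemma satD_filter : filtD (satD f).
Proof.
  split; [exact I | split; [|intros; split; assumption]].
  intros s t Hs Hst. revert Hs.
  induction Hst as [| | | | | | r1 r2 Hr | | | | c r1 r2 | c1 c2 r1 r2 Hc Hr];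
    simpl; try tauto.
  - rewrite !satD_embR. intros H1 k Hk. exact (filter_up (Hf k Hk) _ _ (H1 k Hk) Hr).
  - intros _ k Hk _. exact (filter_top (Hf k Hk)).
  - intros H k Hk _. exact (H k Hk).
  - intros H k Hk. exact (H k Hk (filter_top Hk)).
  - intros [H1 H2] k Hk Hkc. exact (filter_and (Hf k Hk) _ _ (H1 k Hk Hkc) (H2 k Hk Hkc)).
  - intros H1 k Hk Hkc.
    exact (filter_up (Hf k Hk) _ _ (H1 k Hk (filter_up Hk _ _ Hkc Hc)) Hr).
Qed.

End SatD.
End Types.

Section Maps.
Context {T : Type} (le : T -> T -> Prop).
Local Notation bot := (@is_bot T le).
Local Notation join := (@is_join T le).
Local Notation MD := (leD_meet_preorder bot join).
Local Notation MC := (leC_meet_preorder bot join).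

Lemma app_filter d k : filterD le d -> filterC le k -> filterR le (app le d k).
Proof.
  intros Hd Hk. split; [|split].
  - exists omR. split; [|apply leR_refl]. exists omC.
    split; [exact (filter_up Hd _ _ (filter_top Hd) (leD_omarr _ _)) | exact (filter_top Hk)].
  - intros s t [r [Hr Hrs]] Hst. exists r. split; [exact Hr | exact (leR_trans _ _ _ _ _ Hrs Hst)].
  - intros s t [r1 [[c1 [H1 Hc1]] Hr1]] [r2 [[c2 [H2 Hc2]] Hr2]].
    exists (andR r1 r2). split.
    + exists (andC c1 c2). split; [|exact (filter_and Hk _ _ Hc1 Hc2)].
      exact (filter_up Hd _ _ (filter_and Hd _ _ H1 H2) (leD_arr_meet _ _ _ _ _ _)).
    + apply leR_glb.
      * eapply leR_trans; [apply leR_andl | exact Hr1].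
      * eapply leR_trans; [apply leR_andr | exact Hr2].
Qed.

Lemma app_mono d d' k k' : subset d d' -> subset k k' -> subset (app le d k) (app le d' k').
Proof.
  intros Hd Hk r [r0 [[c [Hdc Hc]] Hr]]. exists r0. split; [exists c; auto | exact Hr].
Qed.

Lemma app_union d D :
  seteq (app le d (union_fam D)) (fun r => exists k, D k /\ app le d k r).
Proof.
  intros r. split.
  - intros [r0 [[c [Hdc [X [HX Xc]]]] Hr]]. exists X. split; [exact HX|].
    exists r0. split; [exists c; auto | exact Hr].
  - intros [X [HX [r0 [[c [Hdc Xc]] Hr]]]]. exists r0. split; [|exact Hr].
    exists c. split; [exact Hdc | exists X; auto].
Qed.

Lemma app_upone d c r : d (arrD c r) -> app le d (upone (LeC le) c) r.
Proof.
  intros Hdc. exists r. split; [|apply leR_refl].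
  exists c. split; [exact Hdc | apply leC_refl].
Qed.

Lemma Fmap_scott_cont d : filterD le d -> scott_cont le (Fmap le d).
Proof.
  intros Hd. split; [|split].
  - intros k Hk. exact (app_filter d k Hd Hk).
  - intros k k' _ _. apply app_mono. intros x Hx; exact Hx.
  - intros D _ _. apply app_union.
Qed.

Lemma Fmap_mono d d' : subset d d' -> fun_le le (Fmap le d) (Fmap le d').
Proof. intros Hdd' k _. apply app_mono; [exact Hdd' | intros c Hc; exact Hc]. Qed.

Lemma Gmap_filter f : filterD le (Gmap le f).
Proof. exact (gen_filter_filter MD _ _). Qed.

Lemma Gmap_arr f c r : f (upone (LeC le) c) r -> Gmap le f (arrD c r).
Proof. exact (gen_filter_gen MD _ (fun p => arrD (fst p) (snd p)) (c, r)). Qed.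

Lemma Gmap_least f X : filterD le X ->
  (forall c r, f (upone (LeC le) c) r -> X (arrD c r)) -> subset (Gmap le f) X.
Proof.
  intros HX Hgen. apply (gen_filter_least MD); [exact HX|]. intros [c r]. apply Hgen.
Qed.

Lemma Gmap_mono f g : fun_le le f g -> subset (Gmap le f) (Gmap le g).
Proof.
  intros Hfg. apply gen_filter_mono. intros p Hp. exact (Hfg _ (upone_filter MC _) _ Hp).
Qed.

Lemma Gmap_Fmap d : filterD le d -> seteq (Gmap le (Fmap le d)) d.
Proof.
  intros Hd x. split; revert x.
  - apply Gmap_least; [exact Hd|].
    intros c r [r0 [[c0 [Hdc Hc]] Hr]].
    exact (filter_up Hd _ _ Hdc (leD_arr _ _ _ _ _ _ Hc Hr)).
  - apply (filterD_sub_atoms bot join); [exact Hd | apply Gmap_filter | |].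
    + intros a Ha.
      apply (filter_up (Gmap_filter _)) with (arrD omC (psiR a)); [|apply leD_arrpsi].
      apply Gmap_arr, app_upone. exact (filter_up Hd _ _ Ha (leD_psiarr _ _ _)).
    + intros c r Hcr. apply Gmap_arr, app_upone. exact Hcr.
Qed.

Lemma Fmap_Gmap f : scott_cont le f ->
  forall k, filterC le k -> seteq (Fmap le (Gmap le f) k) (f k).
Proof.
  intros [Hf [Hmono Hcont]] k Hk r. split.
  - intros [r0 [[c [HG Hc]] Hr]].
    assert (Hsat : satD bot join f (arrD c r0)).
    { revert HG. apply Gmap_least; [exact (satD_filter bot join f Hf)|].
      intros c' r' Hr' k' Hk' Hc'.
      apply (Hmono (upone (LeC le) c') k' (upone_filter MC _) Hk'); [|exact Hr'].
      intros t Ht. exact (filter_up Hk' _ _ Hc' Ht). }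
    exact (filter_up (Hf k Hk) _ _ (Hsat k Hk Hc) Hr).
  - intros Hr.
    assert (HD : forall X, principals (LeC le) k X -> filterC le X)
      by apply (principals_filter MC).
    assert (Hdir : directed subset (principals (LeC le) k))
      by exact (principals_directed MC _ Hk).
    assert (Hunion : f (union_fam (principals (LeC le) k)) r).
    { apply (Hmono k); [exact Hk | exact (union_directed_filter _ HD Hdir) |
                        apply (sub_union_principals MC) | exact Hr]. }
    apply (Hcont _ HD Hdir) in Hunion as [X [[c [Hc ->]] HX]].
    exists r. split; [|apply leR_refl]. exists c. split; [apply Gmap_arr; exact HX | exact Hc].
Qed.

Lemma Hmap_filter k : filterC le k ->
  filterD le (fst (Hmap le k)) /\ filterC le (snd (Hmap le k)).
Proof.
  intros Hk. simpl. split; split; [| split | | split].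
  - exists omC. exact (filter_up Hk _ _ (filter_top Hk) (leC_omprd _ _)).
  - intros x y [c Hc] Hxy. exists c.
    exact (filter_up Hk _ _ Hc (leC_prd _ _ _ _ _ _ Hxy (leC_refl _ _ _))).
  - intros x y [c1 H1] [c2 H2]. exists (andC c1 c2).
    exact (filter_up Hk _ _ (filter_and Hk _ _ H1 H2) (leC_prdand _ _ _ _ _ _)).
  - exists omD. exact (filter_up Hk _ _ (filter_top Hk) (leC_omprd _ _)).
  - intros c c' [x Hx] Hcc'. exists x.
    exact (filter_up Hk _ _ Hx (leC_prd _ _ _ _ _ _ (leD_refl _ _ _) Hcc')).
  - intros c1 c2 [x1 H1] [x2 H2]. exists (andD x1 x2).
    exact (filter_up Hk _ _ (filter_and Hk _ _ H1 H2) (leC_prdand _ _ _ _ _ _)).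
Qed.

Lemma Hmap_mono k k' : subset k k' ->
  subset (fst (Hmap le k)) (fst (Hmap le k')) /\ subset (snd (Hmap le k)) (snd (Hmap le k')).
Proof. intros Hkk'. split; intros t [u Hu]; exists u; exact (Hkk' _ Hu). Qed.

Lemma Kmap_filter d k : filterC le (Kmap le (d, k)).
Proof. exact (gen_filter_filter MC _ _). Qed.

Lemma Kmap_prd d k x c : d x -> k c -> Kmap le (d, k) (prdC x c).
Proof.
  intros Hx Hc. exact (gen_filter_gen MC _ (fun p => prdC (fst p) (snd p)) (x, c) (conj Hx Hc)).
Qed.

Lemma Kmap_least d k X : filterC le X ->
  (forall x c, d x -> k c -> X (prdC x c)) -> subset (Kmap le (d, k)) X.
Proof.
  intros HX Hgen. apply (gen_filter_least MC); [exact HX|].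
  intros [x c] [Hx Hc]. exact (Hgen x c Hx Hc).
Qed.

Lemma Kmap_mono d k d' k' :
  subset d d' -> subset k k' -> subset (Kmap le (d, k)) (Kmap le (d', k')).
Proof.
  intros Hd Hk. apply gen_filter_mono. intros p [Hx Hc]. exact (conj (Hd _ Hx) (Hk _ Hc)).
Qed.

Lemma Kmap_Hmap k : filterC le k -> seteq (Kmap le (Hmap le k)) k.
Proof.
  intros Hk c. split; revert c.
  - apply Kmap_least; [exact Hk|]. intros x c [c' H1] [x' H2].
    exact (filter_up Hk _ _ (filter_and Hk _ _ H1 H2) (leC_prd_meet _ _ _ _ _ _)).
  - apply (filterC_sub_prd bot join); [exact Hk | apply Kmap_filter |].
    intros x c Hxc. apply Kmap_prd; [exists c | exists x]; exact Hxc.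
Qed.

Lemma Hmap_Kmap d k : filterD le d -> filterC le k ->
  seteq (fst (Hmap le (Kmap le (d, k)))) d /\ seteq (snd (Hmap le (Kmap le (d, k)))) k.
Proof.
  intros Hd Hk.
  assert (Hsat : subset (Kmap le (d, k)) (satC d k)).
  { apply Kmap_least; [exact (satC_filter bot join d k Hd Hk)|].
    intros x c Hx Hc. exact (conj Hx Hc). }
  split; intros t; split.
  - intros [c Hc]. exact (proj1 (Hsat _ Hc)).
  - intros Ht. exists omC. exact (Kmap_prd _ _ _ _ Ht (filter_top Hk)).
  - intros [x Hx]. exact (proj2 (Hsat _ Hx)).
  - intros Ht. exists omD. exact (Kmap_prd _ _ _ _ (filter_top Hd) Ht).
Qed.

End Maps.

Theorem theorem3p27 (T : Type) (le : T -> T -> Prop)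
  (HR : omega_algebraic_lattice le) :
  F_iso_G le /\ H_iso_K le.
Proof.
  refine (conj (conj _ (conj _ (conj _ (conj _ (conj _ _)))))
               (conj _ (conj _ (conj _ (conj _ (conj _ _)))))).
  - exact (Fmap_scott_cont le).
  - intros f _. exact (Gmap_filter le f).
  - intros d d' _ _. exact (Fmap_mono le d d').
  - intros f g _ _. exact (Gmap_mono le f g).
  - exact (Gmap_Fmap le).
  - exact (Fmap_Gmap le).
  - exact (Hmap_filter le).
  - intros d k _ _. exact (Kmap_filter le d k).
  - intros k k' _ _. exact (Hmap_mono le k k').
  - intros d k d' k' _ _ _ _. exact (Kmap_mono le d k d' k').
  - exact (Kmap_Hmap le).
  - exact (Hmap_Kmap le).
Qed.
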